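(* Let $(V,F)$ be a near vector space with $(F,\circ)$ commutative. Then $(V,F)$ is regular if and only if for any $u\in Q(V)\setminus\{0\}$, $V$ is a vector space over the field $(F,+_u,\circ)$ (with scalar multiplication given by the action of $F$ on $V$); in the regular case all the operations $+_u$, $u\in Q(V)\setminus\{0\}$, coincide.
   Context: An F-group is a pair $(V,F)$ where $(V,+)$ is a group and $F$ is a set of endomorphisms of $V$ such that: the maps $0,1,-1$ lie in $F$; $F\setminus\{0\}$ is a subgroup of $\mathrm{Aut}(V,+)$ under composition; and if $\alpha x=\beta x$ with $\alpha,\beta\in F$, $x\in V$ then $\alpha=\beta$ or $x=0$. The quasi-kernel $Q(V)$ is the set of $u\in V$ such that for all $\alpha,\beta\in F$ there is $\gamma\in F$ with $\alpha u+\beta u=\gamma u$. $(V,F)$ is a near vector space if $Q(V)$ generates $(V,+)$. Commutativity means $\alpha(\beta v)=\beta(\alpha v)$ for all $\alpha,\beta\in F$, $v\in V$. For $u\in Q(V)\setminus\{0\}$, $\alpha+_u\beta$ denotes the unique $\gamma$ with $\alpha u+\beta u=\gamma u$; when $F$ is commutative, $(F,+_u,\circ)$ is a field. Elements $u,v\in Q(V)$ are compatible if there is $\lambda\in F\setminus\{0\}$ with $u+\lambda v\in Q(V)$; $V$ is regular if all elements of $Q(V)\setminus\{0\}$ are pairwise compatible. *)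

From Stdlib Require Import Classical FunctionalExtensionality.
Set Implicit Arguments.

Section NVS.
Variable V : Type.
Variables (add : V -> V -> V) (zero : V) (neg : V -> V).
Variable F : (V -> V) -> Prop.

Definition is_group : Prop :=
  (forall x y z, add x (add y z) = add (add x y) z) /\
  (forall x, add zero x = x) /\ (forall x, add x zero = x) /\
  (forall x, add (neg x) x = zero) /\ (forall x, add x (neg x) = zero).

Definition is_endo (a : V -> V) : Prop := forall x y, a (add x y) = add (a x) (a y).

Definition zero_map : V -> V := fun _ => zero.
Definition id_map : V -> V := fun x => x.
Definition neg_map : V -> V := fun x => neg x.

Definition is_Fgroup : Prop :=
  is_group /\
  (forall a, F a -> is_endo a) /\
  F zero_map /\ F id_map /\ F neg_map /\
  (forall a, F a -> a <> zero_map ->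
     exists b, F b /\ b <> zero_map /\ (forall x, b (a x) = x) /\ (forall x, a (b x) = x)) /\
  (forall a b, F a -> a <> zero_map -> F b -> b <> zero_map ->
     F (fun x => a (b x)) /\ (fun x => a (b x)) <> zero_map) /\
  (forall a b x, F a -> F b -> a x = b x -> a = b \/ x = zero).

Definition inQ (u : V) : Prop :=
  forall a b, F a -> F b -> exists c, F c /\ add (a u) (b u) = c u.

Inductive genQ : V -> Prop :=
  | genQ_base u : inQ u -> genQ u
  | genQ_zero : genQ zero
  | genQ_neg x : genQ x -> genQ (neg x)
  | genQ_add x y : genQ x -> genQ y -> genQ (add x y).

Definition near_vector_space : Prop := is_Fgroup /\ (forall x, genQ x).

Definition F_commutative : Prop :=
  forall a b, F a -> F b -> forall v, a (b v) = b (a v).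

(* plus_u u a b c  <->  c = a +_u b, i.e. c in F and a u + b u = c u. *)
Definition plus_u (u : V) (a b c : V -> V) : Prop := F c /\ add (a u) (b u) = c u.

Definition compatible (u v : V) : Prop :=
  exists l, F l /\ l <> zero_map /\ inQ (add u (l v)).

Definition regular : Prop :=
  forall u v, inQ u -> u <> zero -> inQ v -> v <> zero -> compatible u v.

Definition vector_space_over (u : V) : Prop :=
  (forall x y, add x y = add y x) /\
  (forall a x y, F a -> a (add x y) = add (a x) (a y)) /\
  (forall a b c, F a -> F b -> plus_u u a b c -> forall x, c x = add (a x) (b x)) /\
  (forall a b x, F a -> F b -> (fun y => a (b y)) x = a (b x)) /\
  (forall x, id_map x = x).

Definition plus_ops_coincide : Prop :=
  forall u v, inQ u -> u <> zero -> inQ v -> v <> zero ->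
  forall a b c, F a -> F b -> (plus_u u a b c <-> plus_u v a b c).

End NVS.

(* Let [a u + b u = c u] with [u] a nonzero element of [Q(V)].  The defect
   [D x = a x + b x - c x] is additive, commutes with [F] (this is where
   commutativity of [F] is used) and sends each [q] in [Q(V)] to some [s q]
   with [s] in [F].  If [v] is compatible with [u], say [w = u + l v] in
   [Q(V)], then [D w = l (D v)] and [D w = s w]; either [s = 0], whence
   [D v = 0], or [u] is an [F]-multiple of [v], and [D u = 0] again gives
   [D v = 0].  So in a regular space all [+_u] coincide, and as [Q(V)]
   generates [V], [a +_u b] is the pointwise sum of [a] and [b].  Conversely,
   if [+_u] is the pointwise sum, every element of [V] lies in [Q(V)], so
   [u + v] does and [V] is regular. *)

From Stdlib Require Import Classical FunctionalExtensionality.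

Set Implicit Arguments.
Unset Strict Implicit.

Section Group.

Variables (V : Type) (add : V -> V -> V) (zero : V) (neg : V -> V).
Hypothesis G : is_group add zero neg.

Local Infix "+" := add.
Local Notation "- x" := (neg x).

Lemma addA x y z : x + (y + z) = (x + y) + z.
Proof. apply G. Qed.

Lemma add0l x : zero + x = x.
Proof. apply G. Qed.

Lemma add0r x : x + zero = x.
Proof. apply G. Qed.

Lemma addNl x : - x + x = zero.
Proof. apply G. Qed.

Lemma addNr x : x + - x = zero.
Proof. apply G. Qed.

Lemma addKr x y : (x + y) + - y = x.
Proof. rewrite <- addA, addNr. apply add0r. Qed.

Lemma addIl z x y : z + x = z + y -> x = y.
Proof.
  intros H. rewrite <- (add0l x), <- (add0l y), <- (addNl z), <- !addA, H.
  reflexivity.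
Qed.

Lemma neg_unique x y : x + y = zero -> y = - x.
Proof. intros H. apply (addIl (z := x)). rewrite H. symmetry. apply addNr. Qed.

Lemma subr0_eq x y : x + - y = zero -> x = y.
Proof.
  intros H. rewrite <- (add0r x), <- (addNl y), addA, H. apply add0l.
Qed.

Lemma negK x : - - x = x.
Proof. symmetry. apply neg_unique, addNl. Qed.

Lemma negD x y : - (x + y) = - y + - x.
Proof.
  symmetry. apply neg_unique.
  rewrite addA, <- (addA x y), addNr, add0r. apply addNr.
Qed.

Lemma endo_zero a : is_endo add a -> a zero = zero.
Proof.
  intros Ea. apply (addIl (z := a zero)). rewrite <- Ea, !add0r. reflexivity.
Qed.

Lemma endo_neg a : is_endo add a -> forall x, a (- x) = - a x.
Proof.
  intros Ea x. apply neg_unique. rewrite <- Ea, addNr. apply endo_zero, Ea.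
Qed.

Lemma addC_of_neg_endo : is_endo add (neg_map neg) -> forall x y, x + y = y + x.
Proof.
  intros En x y. rewrite <- (negK x) at 1. rewrite <- (negK y) at 1.
  unfold is_endo, neg_map in En. rewrite <- En, negD, !negK. reflexivity.
Qed.

Lemma endo_vanish_on_genQ F (D : V -> V) :
  is_endo add D -> (forall q, inQ add F q -> D q = zero) ->
  forall x, genQ add zero neg F x -> D x = zero.
Proof.
  intros ED DQ x Gx. induction Gx as [q Qq | | x _ IH | x y _ IHx _ IHy].
  - exact (DQ q Qq).
  - exact (endo_zero ED).
  - rewrite (endo_neg ED), IH. symmetry. apply neg_unique, add0l.
  - rewrite ED, IHx, IHy. apply add0r.
Qed.

End Group.

Section FGroup.

Variables (V : Type) (add : V -> V -> V) (zero : V) (neg : V -> V).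
Variable F : (V -> V) -> Prop.
Hypothesis HF : is_Fgroup add zero neg F.

Local Infix "+" := add.
Local Notation "- x" := (neg x).
Local Notation "0" := (zero_map zero).

Lemma Fgroup_group : is_group add zero neg.
Proof. apply HF. Qed.

Lemma F_endo a : F a -> is_endo add a.
Proof. destruct HF as (_ & Hend & _). apply Hend. Qed.

Lemma F_zero_map : F 0.
Proof. destruct HF as (_ & _ & H0 & _). exact H0. Qed.

Lemma F_id_map : F (@id_map V).
Proof. destruct HF as (_ & _ & _ & H1 & _). exact H1. Qed.

Lemma F_neg_map : F (neg_map neg).
Proof. destruct HF as (_ & _ & _ & _ & Hn & _). exact Hn. Qed.

Lemma F_inverse a : F a -> a <> 0 ->
  exists b, F b /\ b <> 0 /\ (forall x, b (a x) = x).
Proof.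
  intros Fa a0. destruct HF as (_ & _ & _ & _ & _ & Hinv & _).
  destruct (Hinv a Fa a0) as (b & Fb & b0 & Hb & _). eauto.
Qed.

Lemma F_comp a b : F a -> a <> 0 -> F b -> b <> 0 ->
  F (fun x => a (b x)) /\ (fun x => a (b x)) <> 0.
Proof. destruct HF as (_ & _ & _ & _ & _ & _ & Hcomp & _). apply Hcomp. Qed.

Lemma F_zero a : F a -> a zero = zero.
Proof. intros Fa. exact (endo_zero Fgroup_group (F_endo Fa)). Qed.

Lemma F_neg a x : F a -> a (- x) = - a x.
Proof. intros Fa. exact (endo_neg Fgroup_group (F_endo Fa) x). Qed.

Lemma Fgroup_addC x y : x + y = y + x.
Proof. exact (addC_of_neg_endo Fgroup_group (F_endo F_neg_map) x y). Qed.

Lemma Fgroup_addACA x y z t : (x + y) + (z + t) = (x + z) + (y + t).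
Proof.
  pose proof Fgroup_group as G.
  rewrite <- !(addA G). f_equal. rewrite !(addA G). f_equal. apply Fgroup_addC.
Qed.

Lemma F_negN a : F a -> F (fun x => - a x).
Proof.
  intros Fa. destruct (classic (a = 0)) as [-> | a0].
  - replace (fun x => - 0 x) with 0; [exact F_zero_map |].
    apply functional_extensionality. intros x. symmetry. exact (F_zero F_neg_map).
  - destruct (classic (neg_map neg = 0)) as [n0 | n0].
    + replace (fun x => - a x) with 0; [exact F_zero_map |].
      apply functional_extensionality. intros x. exact (eq_sym (equal_f n0 (a x))).
    + exact (proj1 (F_comp F_neg_map n0 Fa a0)).
Qed.

Lemma inQ_sub v a b : inQ add F v -> F a -> F b ->
  exists c, F c /\ a v + - b v = c v.
Proof. intros Qv Fa Fb. exact (Qv a _ Fa (F_negN Fb)). Qed.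

Lemma F_eq0 l : F l -> l <> 0 -> forall x, l x = zero -> x = zero.
Proof.
  intros Fl l0 x Hx. destruct (F_inverse Fl l0) as (b & Fb & _ & Hb).
  rewrite <- (Hb x), Hx. apply (F_zero Fb).
Qed.

Hypothesis Hcomm : F_commutative F.

Section Defect.

Variable D : V -> V.
Hypothesis D_endo : is_endo add D.
Hypothesis D_F : forall m x, F m -> D (m x) = m (D x).
Hypothesis D_Q : forall q, inQ add F q -> exists f, F f /\ D q = f q.

Lemma equivariant_endo_vanish_compatible u v :
  inQ add F v -> u <> zero -> compatible add zero F u v -> D u = zero -> D v = zero.
Proof.
  pose proof Fgroup_group as G.
  intros Qv u0 (l & Fl & l0 & Qw) Du.
  set (w := u + l v) in *.
  destruct (D_Q Qw) as (s & Fs & Dsw).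
  assert (Dlw : D w = l (D v)).
  { unfold w. rewrite D_endo, Du, D_F by exact Fl. apply (add0l G). }
  destruct (classic (s = 0)) as [-> | s0].
  { apply (F_eq0 Fl l0). rewrite <- Dlw, Dsw. reflexivity. }
  destruct (D_Q Qv) as (r & Fr & Drv).
  destruct (inQ_sub Qv Fr Fs) as (t & Ft & Ht).
  (* [s w = l (r v)] and [s w = s u + l (s v)], so [s u = l (r v - s v)]. *)
  assert (Hsu : s u = l (t v)).
  { rewrite <- Ht, (F_endo Fl), (F_neg _ Fl), <- Drv, <- Dlw, Dsw.
    unfold w. rewrite (F_endo Fs), (Hcomm Fs Fl). symmetry. apply (addKr G). }
  destruct (F_inverse Fs s0) as (s' & Fs' & s'0 & Hs').
  assert (Hu : u = s' (l (t v))) by (rewrite <- Hsu; symmetry; apply Hs').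
  destruct (classic (t = 0)) as [-> | t0].
  { contradict u0. rewrite Hu. unfold zero_map. rewrite (F_zero Fl). apply (F_zero Fs'). }
  destruct (F_comp Fl l0 Ft t0) as [Flt lt0].
  destruct (F_comp Fs' s'0 Flt lt0) as [Fm m0].
  apply (F_eq0 Fm m0). rewrite <- (D_F v Fm), <- Hu. exact Du.
Qed.

End Defect.

Definition defect (a b c : V -> V) (x : V) : V := a x + b x + - c x.

Section DefectOfSum.

Variables a b c : V -> V.
Hypotheses (Fa : F a) (Fb : F b) (Fc : F c).

Lemma defect_endo : is_endo add (defect a b c).
Proof.
  intros x y. unfold defect.
  rewrite (F_endo Fa), (F_endo Fb), (F_endo Fc), (negD Fgroup_group).
  rewrite (Fgroup_addC (- c y)), (Fgroup_addACA (a x)). apply Fgroup_addACA.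
Qed.

Lemma defect_F m x : F m -> defect a b c (m x) = m (defect a b c x).
Proof.
  intros Fm. unfold defect.
  rewrite (F_endo Fm), (F_endo Fm), (F_neg _ Fm), (Hcomm Fa Fm), (Hcomm Fb Fm),
    (Hcomm Fc Fm).
  reflexivity.
Qed.

Lemma defect_inQ q : inQ add F q -> exists f, F f /\ defect a b c q = f q.
Proof.
  intros Qq. destruct (Qq a b Fa Fb) as (e & Fe & He).
  unfold defect. rewrite He. exact (inQ_sub Qq Fe Fc).
Qed.

Lemma plus_u_compatible u v : inQ add F v -> u <> zero -> compatible add zero F u v ->
  plus_u add F u a b c -> plus_u add F v a b c.
Proof.
  intros Qv u0 Cuv [_ Hu]. split; [exact Fc |].
  apply (subr0_eq Fgroup_group).
  apply (equivariant_endo_vanish_compatible defect_endo defect_F defect_inQ Qv u0 Cuv).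
  unfold defect. rewrite Hu. apply (addNr Fgroup_group).
Qed.

End DefectOfSum.

Lemma regular_plus_u_pointwise u a b c :
  (forall x, genQ add zero neg F x) -> regular add zero F ->
  inQ add F u -> u <> zero -> F a -> F b -> plus_u add F u a b c ->
  forall x, c x = a x + b x.
Proof.
  intros Hgen Reg Qu u0 Fa Fb Huc x. pose proof (proj1 Huc) as Fc.
  symmetry. apply (subr0_eq Fgroup_group).
  refine (endo_vanish_on_genQ Fgroup_group (defect_endo Fa Fb Fc) _ (Hgen x)).
  intros q Qq. destruct (classic (q = zero)) as [-> | q0].
  - exact (endo_zero Fgroup_group (defect_endo Fa Fb Fc)).
  - destruct (plus_u_compatible Fa Fb Fc Qq u0 (Reg u q Qu u0 Qq q0) Huc) as [_ Hq].
    unfold defect. rewrite Hq. apply (addNr Fgroup_group).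
Qed.

End FGroup.

Lemma vector_space_over_inQ V (add : V -> V -> V) F u :
  vector_space_over add F u -> inQ add F u -> forall x, inQ add F x.
Proof.
  intros (_ & _ & Hsum & _) Qu x a b Fa Fb.
  destruct (Qu a b Fa Fb) as (c & Fc & Hc).
  exists c. split; [exact Fc |]. symmetry. exact (Hsum a b c Fa Fb (conj Fc Hc) x).
Qed.

Lemma regular_of_vector_space V (add : V -> V -> V) zero neg F :
  is_Fgroup add zero neg F ->
  (forall u, inQ add F u -> u <> zero -> vector_space_over add F u) ->
  regular add zero F.
Proof.
  intros HF Hvs u v Qu u0 _ _.
  exists (@id_map V). split; [exact (F_id_map HF) | split].
  - intros Hid. apply u0. exact (equal_f Hid u).
  - exact (vector_space_over_inQ (Hvs u Qu u0) Qu _).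
Qed.

Theorem mainTheorem3 (V : Type) (add : V -> V -> V) (zero : V) (neg : V -> V)
  (F : (V -> V) -> Prop) :
  near_vector_space add zero neg F ->
  F_commutative F ->
  (regular add zero F <->
     (forall u, inQ add F u -> u <> zero -> vector_space_over add F u)) /\
  (regular add zero F -> plus_ops_coincide add zero F).
Proof.
  intros [HF Hgen] Hcomm. split; [split |].
  - intros Reg u Qu u0. repeat split.
    + exact (Fgroup_addC HF).
    + intros a x y Fa. exact (F_endo HF Fa x y).
    + intros a b c Fa Fb. exact (regular_plus_u_pointwise HF Hcomm Hgen Reg Qu u0 Fa Fb).
  - exact (regular_of_vector_space HF).
  - intros Reg u v Qu u0 Qv v0 a b c Fa Fb.
    split; intros Huc; pose proof (proj1 Huc) as Fc.
    + exact (plus_u_compatible HF Hcomm Fa Fb Fc Qv u0 (Reg u v Qu u0 Qv v0) Huc).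
    + exact (plus_u_compatible HF Hcomm Fa Fb Fc Qu v0 (Reg v u Qv v0 Qu u0) Huc).
Qed.
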